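(* If a conjunctive query $Q$ without self-joins contains a vacuum relation, then $Q$ contains no hard structure.
   Context: CQ $Q(\mathbf{A}) :- R_1(\mathbb{A}_1),\dots,R_p(\mathbb{A}_p)$ with distinct relation symbols, $\mathrm{attr}(R_i)=\mathbb{A}_i$, $\mathrm{attr}(Q)=\bigcup_i\mathbb{A}_i$, $\mathrm{head}(Q)=\mathbf{A}$; a relation is vacuum if its attribute set is empty. Standing assumption: distinct relations have distinct attribute sets. $R_j$ is exogenous if another relation $R_i$ has $\mathrm{attr}(R_i)\subsetneq\mathrm{attr}(R_j)$, endogenous otherwise. A path between relations using only attributes in $S$ is a sequence of relations with consecutive ones sharing an attribute of $S$. Triad-like structure: three endogenous relations such that each pair is joined by a path using only attributes in $\mathrm{attr}(Q)\setminus(\mathrm{head}(Q)\cup\mathrm{attr}(R))$, $R$ the third. $R_j$ is dominated by $R_i$ if (1) $\mathrm{attr}(R_i)\subseteq\mathrm{attr}(R_j)$; (2) for every $R_k$ with $\mathrm{attr}(R_i)\setminus\mathrm{attr}(R_k)\ne\emptyset$, $\mathrm{attr}(R_j)\cap\mathrm{attr}(R_k)\subseteq\mathrm{attr}(R_i)\cap\mathrm{head}(Q)$; (3) $\mathrm{attr}(R_i)\subseteq\mathrm{head}(Q)$ or $\mathrm{head}(Q)\subseteq\mathrm{attr}(R_i)$; non-dominated relations are dominated by no other relation. Strand: two non-dominated relations $R_i,R_j$ with $\mathrm{head}(Q)\cap\mathrm{attr}(R_i)\ne\mathrm{head}(Q)\cap\mathrm{attr}(R_j)$ and $(\mathrm{attr}(R_i)\cap\mathrm{attr}(R_j))\setminus\mathrm{head}(Q)\ne\emptyset$.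 The head join of non-dominated relations is the full query of non-dominated relations restricted to $\mathrm{head}(Q)$; a full query is hierarchical if for all attributes $A,B$ the sets of relations containing them are nested or disjoint. $Q$ contains a hard structure if it has a triad-like structure or a strand, or the head join of its non-dominated relations is non-hierarchical. *)

(* A conjunctive query without self-joins is modelled by a
   finite type [I] of (distinct) relation symbols, a finite type [A] of
   attributes, the attribute map [attr : I -> {set A}] and the head set. *)
From mathcomp Require Import all_boot.
Set Implicit Arguments. Unset Strict Implicit. Unset Printing Implicit Defensive.

Section CQ.
Variables (I A : finType) (attr : I -> {set A}) (head : {set A}).

Definition attrQ : {set A} := \bigcup_(i : I) attr i.

Definition vacuum (i : I) : bool := attr i == set0.

Definition exogenous (j : I) : bool := [exists i : I, attr i \proper attr j].
Definition endogenous (j : I) : bool := ~~ exogenous j.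

Definition share_in (S : {set A}) : rel I :=
  fun i j => [exists a in S, (a \in attr i) && (a \in attr j)].

Definition path_in (S : {set A}) (i j : I) : bool := connect (share_in S) i j.

Definition avoid (k : I) : {set A} := attrQ :\: (head :|: attr k).

Definition triad_like (i j k : I) : Prop :=
  [/\ i != j, j != k, i != k,
      [&& endogenous i, endogenous j & endogenous k] &
      [&& path_in (avoid k) i j, path_in (avoid i) j k & path_in (avoid j) i k]].

Definition has_triad : Prop := exists i j k, triad_like i j k.

Definition dominated_by (j i : I) : bool :=
  [&& attr i \subset attr j,
      [forall k : I, (attr i :\: attr k != set0) ==>
                     (attr j :&: attr k \subset attr i :&: head)] &
      (attr i \subset head) || (head \subset attr i)].

Definition non_dominated (j : I) : bool :=
  [forall i : I, (i != j) ==> ~~ dominated_by j i].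

Definition strand (i j : I) : Prop :=
  [/\ non_dominated i, non_dominated j,
      head :&: attr i != head :&: attr j &
      (attr i :&: attr j) :\: head != set0].

Definition has_strand : Prop := exists i j, strand i j.

(* Head join: the full query whose atoms are the non-dominated relations,
   each restricted to head(Q).  The relations containing attribute a: *)
Definition hj_rels (a : A) : {set I} :=
  [set i | non_dominated i & a \in attr i :&: head].

Definition head_join_hierarchical : Prop :=
  forall a b : A,
    [|| hj_rels a \subset hj_rels b, hj_rels b \subset hj_rels a
      | [disjoint hj_rels a & hj_rels b]].

Definition has_hard_structure : Prop :=
  has_triad \/ has_strand \/ ~ head_join_hierarchical.

End CQ.

(* The empty attribute set of a vacuum relation R_v is a proper subset of every
   nonempty one, so every endogenous relation is vacuum, and by injectivity of
   attr there is only one endogenous relation: no triad.  Moreover R_v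
   dominates every other relation, all three conditions being trivial for the
   empty set, so every non-dominated relation is vacuum as well: two of them
   agree on the head (no strand) and the head join has no atom containing an
   attribute (it is hierarchical). *)
From mathcomp Require Import all_boot.

Set Implicit Arguments.
Unset Strict Implicit.
Unset Printing Implicit Defensive.

Section VacuumRelation.
Variables (I A : finType) (attr : I -> {set A}) (head : {set A}).
Variable v : I.
Hypothesis vacuum_v : vacuum attr v.

Let attr_v : attr v = set0. Proof. exact/eqP. Qed.

Lemma endogenous_vacuum (j : I) : endogenous attr j -> vacuum attr j.
Proof.
rewrite /endogenous /exogenous negb_exists => /forallP /(_ v).
by rewrite attr_v proper0 negbK.
Qed.

Lemma dominated_by_vacuum (j : I) : dominated_by attr head j v.
Proof.
rewrite /dominated_by attr_v !sub0set /= andbT.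
by apply/forallP => k; rewrite set0D eqxx.
Qed.

Lemma non_dominated_vacuum (j : I) : non_dominated attr head j -> vacuum attr j.
Proof.
move=> /forallP /(_ v); apply: contraTT => nvac_j.
have -> : v != j by apply: contraNneq nvac_j => <-.
by rewrite negbK dominated_by_vacuum.
Qed.

Lemma no_triad_of_vacuum : injective attr -> ~ has_triad attr head.
Proof.
move=> attr_inj [i [j [k [neq_ij _ _ /and3P [endo_i endo_j _] _]]]].
have endo_eq_v l : endogenous attr l -> l = v.
  by move=> /endogenous_vacuum /eqP attr_l; apply: attr_inj; rewrite attr_l attr_v.
by move: neq_ij; rewrite (endo_eq_v _ endo_i) (endo_eq_v _ endo_j) eqxx.
Qed.

Lemma no_strand_of_vacuum : ~ has_strand attr head.
Proof.
move=> [i [j [nd_i nd_j neq_head _]]].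
move: neq_head; rewrite (eqP (non_dominated_vacuum nd_i)).
by rewrite (eqP (non_dominated_vacuum nd_j)) eqxx.
Qed.

Lemma hj_rels_vacuum (a : A) : hj_rels attr head a = set0.
Proof.
apply/setP => i; rewrite !inE; apply/andP => -[/non_dominated_vacuum /eqP ->].
by rewrite inE.
Qed.

Lemma head_join_hierarchical_vacuum : head_join_hierarchical attr head.
Proof. by move=> a b; rewrite !hj_rels_vacuum subxx. Qed.

End VacuumRelation.

Theorem lemma15 (I A : finType) (attr : I -> {set A}) (head : {set A}) :
  head \subset attrQ attr ->            (* head(Q) is a set of attributes of Q *)
  injective attr ->                     (* standing assumption *)
  (exists i : I, vacuum attr i) ->
  ~ has_hard_structure attr head.
Proof.
move=> _ attr_inj [v vacuum_v] [triad | [strand | not_hierarchical]].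
- exact: (no_triad_of_vacuum vacuum_v attr_inj triad).
- exact: (no_strand_of_vacuum vacuum_v strand).
- exact: not_hierarchical (head_join_hierarchical_vacuum _ vacuum_v).
Qed.
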